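(* Let $G$ be a connected graph with $n$ vertices, let $1\le k\le n$, and let $B_n^{2\times k}$ be the graph obtained from two disjoint copies $G_{n,1}$ and $G_{n,2}$ of $G$ by adding $k$ distinct edges $e_1,\dots,e_k$, each of the form $e_i=(v_{i,1},v_{i,2})$ with $v_{i,1}$ a vertex of $G_{n,1}$ and $v_{i,2}$ a vertex of $G_{n,2}$. Then $$0 < \lambda_2(B_n^{2\times k}) \le \frac{2k}{n}.$$
   Context: All graphs are finite, simple and unweighted. For a graph $H$ with adjacency matrix $A$ and diagonal degree matrix $D$, the graph Laplacian is $L_H = D - A$, with eigenvalues ordered $0=\lambda_1 \le \lambda_2 \le \dots$; $\lambda_2(H)$ denotes the second smallest eigenvalue of $L_H$. *)

From HB Require Import structures.
From mathcomp Require Import all_boot all_order all_algebra.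
From mathcomp.real_closed Require Import polyrcf.
Set Implicit Arguments. Unset Strict Implicit. Unset Printing Implicit Defensive.
Import Order.TTheory GRing.Theory Num.Theory.
Local Open Scope ring_scope.

Definition simple_graph (V : finType) (e : rel V) : Prop :=
  symmetric e /\ irreflexive e.

Definition connected_graph (V : finType) (e : rel V) : Prop :=
  forall x y : V, connect e x y.

Definition degree (V : finType) (e : rel V) (x : V) : nat := #|[set y | e x y]|.

Definition laplacian (R : ringType) (V : finType) (e : rel V) : 'M[R]_#|V| :=
  \matrix_(i, j)
    ((if i == j then (degree e (enum_val i))%:R else 0)
       - (e (enum_val i) (enum_val j))%:R).

(* The eigenvalues of a square matrix over a real closed field, listed with
   algebraic multiplicity in nondecreasing order (only real eigenvalues are
   listed; for a symmetric real matrix, such as a Laplacian, these are all). *)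
Definition spectrum (R : rcfType) (m : nat) (A : 'M[R]_m) : seq R :=
  let p := char_poly A in
  sort <=%R (flatten [seq nseq (mup x p) x | x <- rootsR p]).

(* lambda_2: second smallest eigenvalue (index 1 in the 0-based list). *)
Definition lambda2 (R : rcfType) (V : finType) (e : rel V) : R :=
  (spectrum (laplacian R e))`_1.

(* B_n^{2 x k}: two disjoint copies (inl / inr) of the graph g, plus the
   cross edges {(inl u, inr v) | (u, v) \in E}. *)
Definition bridged (T : finType) (g : rel T) (E : {set T * T}) : rel (T + T) :=
  fun a b =>
    match a, b with
    | inl x, inl y => g x y
    | inr x, inr y => g x y
    | inl x, inr y => (x, y) \in E
    | inr y, inl x => (x, y) \in E
    end.

From HB Require Import structures.
From mathcomp Require Import all_boot all_order all_algebra.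
From mathcomp.real_closed Require Import polyrcf complex.
From mathcomp Require Import ring.
Set Implicit Arguments. Unset Strict Implicit. Unset Printing Implicit Defensive.
Import Order.TTheory GRing.Theory Num.Theory.
Local Open Scope ring_scope.
Local Open Scope sesquilinear_scope.

(* Over [R[i]] the Laplacian, a real symmetric matrix, is unitarily diagonalisable
   with real eigenvalues, and its characteristic polynomial is that of the diagonal
   part; so [lambda2 R e <= c] iff at least two eigenvalues are [<= c]. Working in
   eigen-coordinates, this holds as soon as the Rayleigh quotient is [<= c] on some
   plane, and it provides a nonzero vector orthogonal to the constants with Rayleigh
   quotient [<= c].
   Positivity: such a vector for [c = 0] is constant along every edge, hence constant
   on the connected bridged graph, hence 0.
   Upper bound: on the plane spanned by the constants and the vector that is [1] on
   one copy and [-1] on the other, the Laplacian form only sees the [k] cross edges,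
   and the Rayleigh quotient of [al * side + be] is
   [4 k |al|^2 / (2 n (|al|^2 + |be|^2)) <= 2 k / n]. *)

Lemma count_enum (T : finType) (P : pred T) : count P (enum T) = #|P|.
Proof.
rewrite cardE -size_filter /enum_mem -filter_predI.
by apply/congr1/eq_filter => x /=; rewrite andbT.
Qed.

Lemma sorted_nth1_le d (T : orderType d) (x0 c : T) (s : seq T) :
  sorted <=%O s -> (1 < size s)%N ->
  (nth x0 s 1 <= c)%O = (1 < count (<= c)%O s)%N.
Proof.
case: s => [|a [|b s]] //= /andP[ab]; rewrite le_path_sortedE => /andP[/allP bs _] _.
have [bc|cb] := leP b c; first by rewrite (le_trans ab bc).
suff -> : count (<= c)%O s = 0%N by case: (a <= c)%O.
apply/eqP; rewrite -leqn0 leqNgt -has_count; apply/hasP => -[x /bs bx xc].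
by have := lt_le_trans cb (le_trans bx xc); rewrite ltxx.
Qed.

Lemma char_poly_conj (F : fieldType) n (P D : 'M[F]_n) :
  P \in unitmx -> char_poly (invmx P *m D *m P) = char_poly D.
Proof.
move=> Pu; rewrite /char_poly /char_poly_mx !map_mxM.
set Pi := map_mx polyC (invmx P); set P' := map_mx polyC P.
have PiP : Pi *m P' = 1%:M by rewrite -map_mxM mulVmx // map_mx1.
have PPi : P' *m Pi = 1%:M by rewrite -map_mxM mulmxV // map_mx1.
have X_conj : ('X%:M : 'M[{poly F}]_n) = Pi *m 'X%:M *m P'.
  by rewrite mul_mx_scalar -scalemxAl PiP scale_scalar_mx mulr1.
by rewrite {1}X_conj -mulmxBl -mulmxBr !det_mulmx mulrC mulrA -det_mulmx PPi det1 mul1r.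
Qed.

Lemma perm_roots_prod_XsubC (R : rcfType) (rs : seq R)
    (p := \prod_(a <- rs) ('X - a%:P)) :
  perm_eq (flatten [seq nseq (mup x p) x | x <- rootsR p]) rs.
Proof.
have p0 : p != 0 by rewrite monic_neq0 ?monic_prod_XsubC.
apply: perm_trans (perm_count_undup rs).
rewrite (eq_map (fun x => congr1 (nseq^~ x) (mu_prod_XsubC x rs))).
apply/perm_flatten/perm_map/uniq_perm; [exact: uniq_roots | exact: undup_uniq |].
move=> x; rewrite mem_undup -(roots_on_rootsR p0 x) root_prod_XsubC.
by rewrite itv_boundlr.
Qed.

Lemma nontrivial_kernel2 (F : fieldType) (s t : F) :
  exists al be : F, (al != 0) || (be != 0) /\ al * s + be * t = 0.
Proof.
have [s0|s0] := eqVneq s 0; first by exists 1, 0; rewrite oner_eq0 s0 !mul0r mulr0 addr0.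
by exists t, (- s); rewrite oppr_eq0 s0 orbT mulNr mulrC subrr.
Qed.

Section Unitary.
Variable C : numClosedFieldType.

Lemma dotmx_mulmx_unitary n (M : 'M[C]_n) (u v : 'rV[C]_n) :
  M \is unitarymx -> dotmx (u *m M) (v *m M) = dotmx u v.
Proof.
move=> /unitarymxP MMt.
by rewrite !dotmxE trmx_mul map_mxM !mulmxA -(mulmxA u) MMt mulmx1.
Qed.

Lemma dotmx_diag n (y d : 'rV[C]_n) :
  dotmx (y *m diag_mx d) y = \sum_i d 0 i * `|y 0 i| ^+ 2.
Proof.
rewrite dotmxE mul_mx_diag !mxE; apply: eq_bigr => i _.
by rewrite !mxE normCK mulrCA mulrA.
Qed.

End Unitary.

(** * Eigen-coordinates of a Hermitian matrix *)

Section EigenCoordinates.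
Variables (C : numClosedFieldType) (n : nat) (A : 'M[C]_n).
Hypothesis A_herm : A \is hermsymmx.
Local Notation P := (spectralmx A).
Local Notation d := (spectral_diag A).

Lemma spectral_decomposition : A = P^t* *m diag_mx d *m P.
Proof.
rewrite -invmx_unitary ?spectral_unitarymx //.
exact/orthomx_spectralP/hermitian_normalmx.
Qed.

Lemma eigen_coordsK (x : 'rV[C]_n) : x *m P^t* *m P = x.
Proof. by rewrite -invmx_unitary ?spectral_unitarymx // mulmxKV ?spectral_unit. Qed.

Lemma dotmx_spectral (x : 'rV[C]_n) (c : C) :
  dotmx (x *m A) x - c * dotmx x x =
  \sum_i (d 0 i - c) * `|(x *m P^t*) 0 i| ^+ 2.
Proof.
set y := x *m P^t*; have Pu := spectral_unitarymx A.
have xE : x = y *m P by rewrite eigen_coordsK.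
have -> : x *m A = y *m diag_mx d *m P.
  rewrite {1}xE -mulmxA [X in y *m (_ *m X)]spectral_decomposition !mulmxA.
  by rewrite -(mulmxA y) (unitarymxP Pu) mulmx1.
have -> : dotmx x x = \sum_i 1 * `|y 0 i| ^+ 2.
  rewrite xE dotmx_mulmx_unitary // dotmxE mxE.
  by apply: eq_bigr => i _; rewrite !mxE normCK mul1r.
rewrite {1}xE dotmx_mulmx_unitary // dotmx_diag mulr_sumr -sumrB.
by apply: eq_bigr => i _; rewrite mul1r mulrBl.
Qed.

Lemma exists_dotmx_le_kernel (i j : 'I_n) (c : C) (u : 'cV[C]_n) :
  i != j -> d 0 i <= c -> d 0 j <= c ->
  exists2 w : 'rV[C]_n, w != 0 & w *m u = 0 /\ dotmx (w *m A) w <= c * dotmx w w.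
Proof.
(* [w] is taken in the span of the [i]-th and [j]-th eigenvectors, where one
   linear condition still leaves a nonzero solution. *)
move=> ij di dj; pose t := P *m u.
have [al [be [albe0 kert]]] := nontrivial_kernel2 (t i 0) (t j 0).
pose y : 'rV[C]_n := \row_k (if k == i then al else if k == j then be else 0).
have yi : y 0 i = al by rewrite mxE eqxx.
have yj : y 0 j = be by rewrite mxE eq_sym (negbTE ij) eqxx.
have yk k : k != i -> k != j -> y 0 k = 0 by rewrite mxE => /negbTE-> /negbTE->.
exists (y *m P); last split.
- apply: contraTneq albe0 => yP0.
  have y0 : y = 0 by rewrite -(mulmxK (spectral_unit A) y) yP0 mul0mx.
  by rewrite -yi -yj y0 !mxE eqxx.
- apply/rowP => l; rewrite ord1 -mulmxA -/t !mxE (bigD1 i) //= (bigD1 j) 1?eq_sym //=.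
  rewrite big1 ?addr0 ?yi ?yj ?addrA // => k /andP[ki kj].
  by rewrite yk ?mul0r.
- rewrite -subr_le0 dotmx_spectral -mulmxA (unitarymxP (spectral_unitarymx A)) mulmx1.
  apply: sumr_le0 => k _.
  have [->|ki] := eqVneq k i; first by apply: mulr_le0_ge0; rewrite ?subr_le0 ?exprn_ge0.
  have [->|kj] := eqVneq k j; first by apply: mulr_le0_ge0; rewrite ?subr_le0 ?exprn_ge0.
  by rewrite yk // normr0 expr0n mulr0.
Qed.

Lemma card_spectral_le_gt1 (c : C) (a b : 'rV[C]_n) :
  c \is Num.real ->
  (forall al be, al *: a + be *: b = 0 -> al = 0 /\ be = 0) ->
  (forall al be, let w := al *: a + be *: b in dotmx (w *m A) w <= c * dotmx w w) ->
  (1 < #|[pred i | (d 0 i <= c)%R]|)%N.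
Proof.
move=> cR ab_free le_ab; rewrite ltnNge; apply/negP => card_le1.
(* Some nonzero [w] in the plane then has a zero eigen-coordinate at every
   eigenvalue [<= c] (there is at most one), so its Rayleigh quotient exceeds [c]. *)
have dR (i : 'I_n) : d 0 i \is Num.real by apply/mxOverP/hermitian_spectral_diag_real.
pose y al be := (al *: a + be *: b) *m P^t*.
have yE al be (i : 'I_n) : y al be 0 i = al * (a *m P^t*) 0 i + be * (b *m P^t*) 0 i.
  by rewrite /y mulmxDl -!scalemxAl !mxE.
suff [al [be [albe0 yle0]]] : exists al be, (al != 0) || (be != 0) /\
    forall i, d 0 i <= c -> y al be 0 i = 0.
  have /rV0Pn[i0 yi0] : y al be != 0.
    apply: contraTneq albe0 => y0.
    have w0 : al *: a + be *: b = 0.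
      by rewrite -(eigen_coordsK (al *: a + be *: b)) -/(y al be) y0 mul0mx.
    by have [-> ->] := ab_free al be w0; rewrite eqxx.
  have ci0 : c < d 0 i0 by rewrite real_ltNge //; apply: contra yi0 => /yle0 ->.
  have := le_ab al be; rewrite /= -subr_le0 dotmx_spectral -/(y al be) lt_geF //.
  have term_ge0 (i : 'I_n) : 0 <= (d 0 i - c) * `|y al be 0 i| ^+ 2.
    have [/yle0->|] := boolP (d 0 i <= c); first by rewrite normr0 expr0n mulr0.
    by rewrite -real_ltNge // => /ltW ci; rewrite mulr_ge0 ?subr_ge0 ?exprn_ge0.
  rewrite (bigD1 i0) //= ltr_wpDr ?sumr_ge0 // mulr_gt0 ?subr_gt0 //.
  by rewrite exprn_gt0 ?normr_gt0.
have [j /= dj|dgt] := pickP [pred i | d 0 i <= c]; last first.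
  by exists 1, 0; rewrite oner_eq0; split=> // i di; have := dgt i; rewrite /= di.
have [al [be [albe0 yj0]]] := nontrivial_kernel2 ((a *m P^t*) 0 j) ((b *m P^t*) 0 j).
exists al, be; split=> // i di; rewrite yE.
suff /eqP-> : i == j by [].
by apply: contraTT card_le1 => ij; rewrite -ltnNge; apply/card_gt1P; exists i, j.
Qed.

End EigenCoordinates.

(** * The spectrum of a real symmetric matrix *)

Section RealSymmetric.
Local Open Scope complex_scope.
Variables (R : rcfType) (n : nat) (M : 'M[R]_n).
Hypothesis M_sym : M^T = M.
Local Notation MC := (map_mx (real_complex R) M).
Local Notation d := (spectral_diag MC).

Lemma map_realsym_hermsym : MC \is hermsymmx.
Proof.
apply: realsym_hermsym.
  by rewrite qualifE /= expr0 scale1r map_mx_id // map_trmx M_sym.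
by apply/mxOverP => i j; rewrite mxE; apply/complex_realP; exists (M i j).
Qed.

Lemma spectral_diag_realsym i : (complex.Re (d 0 i))%:C = d 0 i.
Proof.
apply: RRe_real; apply/mxOverP: i; exact/hermitian_spectral_diag_real/map_realsym_hermsym.
Qed.

Lemma char_poly_realsym :
  char_poly M = \prod_(i < n) ('X - (complex.Re (d 0 i))%:P).
Proof.
apply: (@map_poly_inj _ _ (real_complex R)).
have MC_normal := hermitian_normalmx map_realsym_hermsym.
rewrite map_char_poly [in char_poly _](orthomx_spectralP MC_normal).
rewrite char_poly_conj ?spectral_unit // char_poly_trig ?diag_mx_is_trig //.
rewrite map_prod_XsubC; apply: eq_bigr => i _.
by rewrite mxE eqxx mulr1n; congr (_ - _%:P); apply/esym/spectral_diag_realsym.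
Qed.

Lemma perm_spectrum_realsym :
  perm_eq (spectrum M) [seq complex.Re (d 0 i) | i <- enum 'I_n].
Proof.
rewrite /spectrum perm_sort char_poly_realsym.
rewrite -big_enum -(big_map (fun i => complex.Re (d 0 i)) xpredT (fun a => 'X - a%:P)).
exact: perm_roots_prod_XsubC.
Qed.

Lemma spectrum_nth1_le (c : R) : (1 < n)%N ->
  ((spectrum M)`_1 <= c) = (1 < #|[pred i | (d 0 i <= c%:C)%R]|)%N.
Proof.
have sp_perm := perm_spectrum_realsym.
move=> n_gt1; rewrite sorted_nth1_le; first last.
- by rewrite (perm_size sp_perm) size_map size_enum_ord.
- exact/sort_sorted/le_total.
rewrite (permP sp_perm) count_map count_enum; congr (1 < _)%N; apply: eq_card => i.
by rewrite !inE /= -[in RHS]spectral_diag_realsym lecR.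
Qed.

Lemma spectrum_nth1_le_of_plane (c : R) (a b : 'rV[R[i]]_n) : (1 < n)%N ->
  (forall al be, al *: a + be *: b = 0 -> al = 0 /\ be = 0) ->
  (forall al be, let w := al *: a + be *: b in
     dotmx (w *m MC) w <= c%:C * dotmx w w) ->
  (spectrum M)`_1 <= c.
Proof.
move=> n_gt1 ab_free le_ab; rewrite spectrum_nth1_le //.
apply: (card_spectral_le_gt1 map_realsym_hermsym) ab_free le_ab.
by apply/complex_realP; exists c.
Qed.

Lemma spectrum_nth1_le_witness (c : R) (u : 'cV[R[i]]_n) : (1 < n)%N ->
  (spectrum M)`_1 <= c ->
  exists2 w : 'rV_n, w != 0 & w *m u = 0 /\ dotmx (w *m MC) w <= c%:C * dotmx w w.
Proof.
move=> n_gt1; rewrite spectrum_nth1_le // => /card_gt1P[i [j [di dj ij]]].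
rewrite !inE in di dj; exact: (exists_dotmx_le_kernel map_realsym_hermsym u ij).
Qed.

End RealSymmetric.

(** * Graph Laplacians *)

Definition row_of_fun (T : finType) (X : Type) (f : T -> X) : 'rV[X]_#|T| :=
  \row_i f (enum_val i).

Lemma row_of_fun_enum_rank (T : finType) (X : Type) (x : 'rV[X]_#|T|) :
  row_of_fun (fun v => x 0 (enum_rank v)) = x.
Proof. by apply/rowP => i; rewrite mxE enum_valK. Qed.

Lemma sum_row_of_fun (T : finType) (X : nmodType) (f : T -> X) :
  \sum_i row_of_fun f 0 i = \sum_v f v.
Proof. by under eq_bigr => i _ do rewrite mxE; rewrite -big_enum_val. Qed.

Section Laplacian.
Variables (V : finType) (e : rel V).
Hypothesis e_sym : symmetric e.

Lemma degreeE (R : pzSemiRingType) v : (degree e v)%:R = \sum_u (e v u)%:R :> R.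
Proof.
rewrite /degree -sum1_card natr_sum big_mkcond /=.
by apply: eq_bigr => u _; rewrite inE; case: (e v u).
Qed.

Lemma laplacian_sym (R : nzRingType) : (laplacian R e)^T = laplacian R e.
Proof.
apply/matrixP => i j; rewrite !mxE (e_sym (enum_val j)).
by case: eqVneq => [->|ij]; rewrite ?eqxx // eq_sym (negbTE ij).
Qed.

Lemma map_laplacian (R S : nzRingType) (f : {rmorphism R -> S}) :
  map_mx f (laplacian R e) = laplacian S e.
Proof.
by apply/matrixP => i j; rewrite !mxE rmorphB rmorph_nat fun_if rmorph_nat rmorph0.
Qed.

Lemma row_of_fun_mul_laplacian (R : comNzRingType) (f : V -> R) :
  row_of_fun f *m laplacian R e =
  row_of_fun (fun u => \sum_v (e u v)%:R * (f u - f v)).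
Proof.
apply/rowP => j; rewrite !mxE.
under eq_bigr => i _ do rewrite !mxE mulrBr.
rewrite sumrB (bigD1 j) //= eqxx big1 => [|i /negbTE ij]; last by rewrite ij mulr0.
under [RHS]eq_bigr => v _ do rewrite mulrBr.
rewrite addr0 sumrB -mulr_suml -degreeE mulrC.
rewrite -(big_enum_val (fun v => f v * (e v (enum_val j))%:R)) /=; congr (_ - _).
by apply: eq_bigr => v _; rewrite mulrC e_sym.
Qed.

Variable C : numClosedFieldType.

Lemma dotmx_row_of_fun (f g : V -> C) :
  dotmx (row_of_fun f) (row_of_fun g) = \sum_v f v * (g v)^*.
Proof.
rewrite dotmxE mxE; under eq_bigr => i _ do rewrite !mxE.
by rewrite -(big_enum_val (fun v => f v * (g v)^*)).
Qed.

Lemma laplacian_dotmx (f : V -> C) :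
  2 * dotmx (row_of_fun f *m laplacian C e) (row_of_fun f) =
  \sum_u \sum_v (e u v)%:R * `|f u - f v| ^+ 2.
Proof.
rewrite row_of_fun_mul_laplacian dotmx_row_of_fun.
under eq_bigr => u _ do rewrite mulr_suml.
rewrite mulr_natl mulr2n {2}exchange_big -big_split /=; apply: eq_bigr => u _.
rewrite -big_split; apply: eq_bigr => v _ /=.
by rewrite (e_sym v u) normCK rmorphB; ring.
Qed.

Lemma laplacian_dotmx_le0 (f : V -> C) :
  dotmx (row_of_fun f *m laplacian C e) (row_of_fun f) <= 0 ->
  forall u v, e u v -> f u = f v.
Proof.
move=> le0 u v euv.
have term_ge0 u' v' : 0 <= (e u' v')%:R * `|f u' - f v'| ^+ 2 :> C.
  by rewrite mulr_ge0 ?exprn_ge0.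
have sum0 : \sum_u \sum_v (e u v)%:R * `|f u - f v| ^+ 2 = 0 :> C.
  apply/eqP; rewrite eq_le -[X in X <= 0]laplacian_dotmx pmulr_rle0 ?ltr0n // le0 /=.
  by apply: sumr_ge0 => u' _; apply: sumr_ge0.
have row_ge0 u' : true -> 0 <= \sum_v (e u' v)%:R * `|f u' - f v| ^+ 2.
  by move=> _; apply: sumr_ge0.
have row0 := psumr_eq0P row_ge0 sum0 (i := u) isT.
have := psumr_eq0P (fun v' _ => term_ge0 u v') row0 (i := v) isT.
by rewrite euv mul1r => /eqP; rewrite expf_eq0 /= normr_eq0 subr_eq0 => /eqP.
Qed.

End Laplacian.

Lemma connect_eq_fun (T : finType) (X : eqType) (e : rel T) (f : T -> X) :
  (forall x y, e x y -> f x = f y) -> forall x y, connect e x y -> f x = f y.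
Proof.
move=> fe x y xy; have f_closed : closed e [pred z | f z == f x].
  by move=> u v /fe; rewrite !inE => ->.
by have := closed_connect f_closed xy; rewrite !inE eqxx => /esym/eqP.
Qed.

Lemma connect_homo (T T' : finType) (h : T -> T') (e : rel T) (e' : rel T') :
  (forall x y, e x y -> e' (h x) (h y)) ->
  forall x y, connect e x y -> connect e' (h x) (h y).
Proof.
move=> he x y /connectP[p + ->]; elim: p x => [|z p IH] x /=; first by rewrite connect0.
by case/andP => /he hxz /IH; apply: connect_trans (connect1 hxz).
Qed.

Section SecondEigenvalue.
Local Open Scope complex_scope.

Lemma lambda2_gt0 (R : rcfType) (V : finType) (e : rel V) :
  symmetric e -> connected_graph e -> (1 < #|V|)%N -> 0 < lambda2 R e.
Proof.
move=> e_sym e_conn V_gt1; rewrite ltNge; apply/negP => le0.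
have [w w_neq0 [w1 w_le0]] :=
  spectrum_nth1_le_witness (laplacian_sym e_sym R) (const_mx 1 : 'cV_#|V|) V_gt1 le0.
rewrite map_laplacian rmorph0 mul0r in w_le0.
rewrite -(row_of_fun_enum_rank w) in w_neq0 w1 w_le0.
set f := fun v => w 0 (enum_rank v) in w_neq0 w1 w_le0.
have f_const u v : f u = f v :=
  connect_eq_fun (laplacian_dotmx_le0 e_sym w_le0) (e_conn u v).
have /card_gt0P[v0 _] : (0 < #|V|)%N by apply: ltnW.
have : (row_of_fun f *m const_mx 1 : 'cV_1) 0 0 = #|V|%:R * f v0.
  rewrite mxE; under eq_bigr => i _ do rewrite [const_mx _ _ _]mxE mulr1.
  by rewrite sum_row_of_fun (eq_bigr _ (fun v _ => f_const v v0)) sumr_const mulr_natl.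
rewrite w1 mxE => /esym/eqP; rewrite mulf_eq0 pnatr_eq0 eqn0Ngt (ltnW V_gt1) /= => /eqP fv0.
move: w_neq0; rewrite (_ : row_of_fun f = 0) ?eqxx //.
by apply/rowP => i; rewrite !mxE (f_const _ v0) fv0.
Qed.

Lemma lambda2_le_of_plane (R : rcfType) (V : finType) (e : rel V) (c : R)
    (f g : V -> R[i]) :
  symmetric e -> (1 < #|V|)%N ->
  (forall al be, (forall v, al * f v + be * g v = 0) -> al = 0 /\ be = 0) ->
  (forall al be, let h v := al * f v + be * g v in
     \sum_u \sum_v (e u v)%:R * `|h u - h v| ^+ 2 <= 2 * c%:C * \sum_v `|h v| ^+ 2) ->
  lambda2 R e <= c.
Proof.
move=> e_sym V_gt1 fg_free le_fg.
have rowE al be : al *: row_of_fun f + be *: row_of_fun g =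
    row_of_fun (fun v => al * f v + be * g v).
  by apply/rowP => i; rewrite !mxE.
apply: (spectrum_nth1_le_of_plane (laplacian_sym e_sym R)
          (a := row_of_fun f) (b := row_of_fun g) V_gt1) => al be.
  rewrite rowE => /rowP w0; apply: fg_free => v.
  by have := w0 (enum_rank v); rewrite !mxE enum_rankK.
rewrite /= rowE map_laplacian -(ler_pM2l (ltr0Sn _ 1)) mulrA laplacian_dotmx //.
rewrite dotmx_row_of_fun; under [X in _ <= _ * X]eq_bigr => v _ do rewrite -normCK.
exact: le_fg.
Qed.

End SecondEigenvalue.

(** * The bridged graph *)

Lemma normC_parallelogram (C : numClosedFieldType) (x y : C) :
  `|x + y| ^+ 2 + `|x - y| ^+ 2 = 2 * (`|x| ^+ 2 + `|y| ^+ 2).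
Proof. by rewrite !normCK rmorphD rmorphB; ring. Qed.

Section Bridged.
Local Open Scope complex_scope.
Variables (T : finType) (g : rel T) (E : {set T * T}).
Local Notation B := (bridged g E).

Lemma bridged_sym : symmetric g -> symmetric B.
Proof. by move=> g_sym [x|x] [y|y] //=. Qed.

Lemma bridged_connected : connected_graph g -> (0 < #|E|)%N -> connected_graph B.
Proof.
move=> g_conn /card_gt0P[[x0 y0] xyE].
have lconn x x' : connect B (inl x) (inl x') by apply: connect_homo (g_conn x x').
have rconn y y' : connect B (inr y) (inr y') by apply: connect_homo (g_conn y y').
have lr : connect B (inl x0) (inr y0) by apply: connect1.
have rl : connect B (inr y0) (inl x0) by apply: connect1.
case=> [x|y] [x'|y'] //.
- exact: connect_trans (lconn x x0) (connect_trans lr (rconn y0 y')).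
- exact: connect_trans (rconn y y0) (connect_trans rl (lconn x0 x')).
Qed.

Definition side {X : pzRingType} (v : T + T) : X := if v is inl _ then 1 else -1.

Lemma bridged_side_energy (C : numClosedFieldType) :
  \sum_u \sum_v (B u v)%:R * `|side u - side v| ^+ 2 = (8 * #|E|)%:R :> C.
Proof.
have cardE : \sum_x \sum_y ((x, y) \in E)%:R = #|E|%:R :> C.
  rewrite pair_big /= -natr_sum -sum1_card; congr _%:R.
  by rewrite [RHS]big_mkcond; apply: eq_bigr => -[x y] _ /=; case: ((x, y) \in E).
have same_side (s : C) : `|s - s| ^+ 2 = 0 by rewrite subrr normr0 expr0n.
have other_side : `|1 - -1| ^+ 2 = 4 :> C /\ `|-1 - 1| ^+ 2 = 4 :> C.
  have two : 1 - -1 = 2%:R :> C by rewrite opprK.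
  have mtwo : -1 - 1 = - 2%:R :> C by rewrite -opprD.
  by rewrite two mtwo normrN normr_nat -natrX.
rewrite big_sumType /=.
under eq_bigr => x _ do
  rewrite big_sumType /= same_side other_side.1 -!mulr_suml mulr0 add0r.
under [X in _ + X]eq_bigr => y _ do
  rewrite big_sumType /= same_side other_side.2 -!mulr_suml mulr0 addr0.
rewrite -!mulr_suml [X in _ + X * _]exchange_big /= cardE -mulrDl -natrD -natrM.
by congr _%:R; rewrite mulnC mulnDr -mulnDl.
Qed.

Lemma bridged_lambda2_le (R : rcfType) : symmetric g -> (0 < #|T|)%N ->
  lambda2 R B <= (2 * #|E|)%:R / #|T|%:R.
Proof.
move=> g_sym T_gt0; have /card_gt0P[t0 _] := T_gt0.
apply: (lambda2_le_of_plane (f := side) (g := fun _ => 1)).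
- exact: bridged_sym.
- by rewrite card_sum; exact: (leq_add T_gt0 T_gt0).
- move=> al be hE; have /= hl := hE (inl t0); have /= hr := hE (inr t0).
  have : 2 * be = (al * 1 + be * 1) + (al * -1 + be * 1) by ring.
  rewrite hl hr addr0 => /eqP; rewrite mulf_eq0 pnatr_eq0 /= => /eqP be0.
  by move: hl; rewrite be0 mul0r addr0 mulr1.
move=> al be /=.
have -> : \sum_u \sum_v (B u v)%:R *
    `|al * side u + be * 1 - (al * side v + be * 1)| ^+ 2 = `|al| ^+ 2 * (8 * #|E|)%:R.
  rewrite -bridged_side_energy mulr_sumr; apply: eq_bigr => u _.
  rewrite mulr_sumr; apply: eq_bigr => v _.
  have -> : al * side u + be * 1 - (al * side v + be * 1) = al * (side u - side v) by ring.
  by rewrite normrM exprMn mulrCA.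
have -> : \sum_v `|al * side v + be * 1| ^+ 2 = #|T|%:R * (2 * (`|al| ^+ 2 + `|be| ^+ 2)).
  rewrite big_sumType /= !sumr_const -mulrnDl mulr_natl.
  have -> : al * 1 + be * 1 = be + al by ring.
  have -> : al * -1 + be * 1 = be - al by ring.
  by rewrite normC_parallelogram addrC.
have n0 : (#|T|%:R : R[i]) != 0 by rewrite pnatr_eq0 -lt0n.
have -> : 2 * ((2 * #|E|)%:R / #|T|%:R)%:C *
    (#|T|%:R * (2 * (`|al| ^+ 2 + `|be| ^+ 2))) =
    (8 * #|E|)%:R * (`|al| ^+ 2 + `|be| ^+ 2).
  by rewrite fmorph_div !rmorph_nat !natrM; field.
by rewrite mulrC ler_wpM2l ?ler0n // lerDl exprn_ge0.
Qed.

End Bridged.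

Theorem theorem4p3 (R : rcfType) (T : finType) (g : rel T) (E : {set T * T})
    (k : nat) :
  simple_graph g -> connected_graph g ->
  #|E| = k -> (1 <= k)%N -> (k <= #|T|)%N ->
  0 < lambda2 R (bridged g E) /\
  lambda2 R (bridged g E) <= (2 * k)%:R / (#|T|)%:R.
Proof.
move=> [g_sym _] g_conn <- E_gt0 _.
have /card_gt0P[[t _] _] := E_gt0.
have T_gt0 : (0 < #|T|)%N by apply/card_gt0P; exists t.
split; last exact: bridged_lambda2_le.
apply: lambda2_gt0; [exact: bridged_sym | exact: bridged_connected |].
by rewrite card_sum; exact: (leq_add T_gt0 T_gt0).
Qed.
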